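(* Let $a,b,c,x,y,t\in\mathbb{C}$ with $|yt|<1$. Let $d,e,xt\in\mathbb{C}\setminus\{q^{-m}:m\ge0\}$. Then $$\sum_{n=0}^\infty\phi_n^{(a,b,c;d,e)}(x,y|q)\frac{(-1)^nq^{\binom n2}t^n}{(q;q)_n}=(xt;q)_\infty\sum_{N=0}^\infty\frac{(-1)^Nq^{\binom N2}(a,b,c;q)_N}{(q,d,e,xt;q)_N}(yt)^N.$$
   Context: Throughout, $0<q<1$. $(\alpha;q)_0=1$, $(\alpha;q)_n=\prod_{j=0}^{n-1}(1-\alpha q^j)$, $(\alpha;q)_\infty=\prod_{j\ge0}(1-\alpha q^j)$, and $(\alpha_1,\dots,\alpha_r;q)_n=\prod_i(\alpha_i;q)_n$. $\begin{bmatrix}n\\k\end{bmatrix}=\frac{(q;q)_n}{(q;q)_k(q;q)_{n-k}}$. $$\phi_n^{(a,b,c;d,e)}(x,y|q)=\sum_{k=0}^n\begin{bmatrix}n\\k\end{bmatrix}\frac{(a,b,c;q)_k}{(d,e;q)_k}x^{n-k}y^k.$$ *)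

From HB Require Import structures.
From mathcomp Require Import all_boot all_order all_algebra.
From mathcomp Require Import complex.
From mathcomp Require Import all_classical all_reals all_analysis.
Set Implicit Arguments. Unset Strict Implicit. Unset Printing Implicit Defensive.
Import Order.TTheory GRing.Theory Num.Theory ComplexField.
Import numFieldTopology.Exports numFieldNormedType.Exports.
Local Open Scope ring_scope.

(* The complex numbers over a real type R, seen as a numClosedFieldType so that
   MathComp-Analysis' topology / normed structure (limits, series) applies. *)
Definition Cx (R : realType) : numClosedFieldType := R[i].

Definition qpoch {R : realType} (q alpha : Cx R) (n : nat) : Cx R :=
  \prod_(j < n) (1 - alpha * q ^+ j).

Definition qbinom {R : realType} (q : Cx R) (n k : nat) : Cx R :=
  qpoch q q n / (qpoch q q k * qpoch q q (n - k)).

Definition phi {R : realType} (q a b c d e x y : Cx R) (n : nat) : Cx R :=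
  \sum_(k < n.+1) qbinom q n k *
     ((qpoch q a k * qpoch q b k * qpoch q c k) / (qpoch q d k * qpoch q e k))
     * x ^+ (n - k) * y ^+ k.

From HB Require Import structures.
From mathcomp Require Import all_boot all_order all_algebra.
From mathcomp Require Import complex.
From mathcomp Require Import all_classical all_reals all_analysis.
From mathcomp Require Import ring lra zify.
Import Order.TTheory GRing.Theory Num.Theory ComplexField.
Import numFieldTopology.Exports numFieldNormedType.Exports.
Local Open Scope ring_scope.
Local Open Scope classical_set_scope.
Local Open Scope complex_scope.

(* Write E(z) = \sum_m (-1)^m q^C(m,2) z^m / (q;q)_m for Euler's series.  It
   converges absolutely for every z (consecutive terms have ratio O(q^m)),
   satisfies E(z) = (1 - z) E(qz) and E(q^N z) -> 1, hence
   (z;q)_N = E(z) / E(q^N z) -> E(z), i.e. E(z) = (z;q)_oo.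
   Expanding the q-binomial in phi_n, the n-th term of the left-hand series is
   the Cauchy product \sum_(k <= n) alpha_k e_(n-k)(q^k x t), where alpha_k is
   the k-th term of the right-hand series without its factor 1/(xt;q)_k and
   e_m is the m-th term of E.  The inner series are dominated by |e_m(x t)|
   uniformly in k, so the product sums to \sum_k alpha_k E(q^k x t), and
   E(x t) = (xt;q)_k E(q^k x t) turns this into E(x t) times the right-hand
   series. *)

(* The modulus of [Cx R] as a real number: the norm [`|z|] of [Cx R] takes
   values in [Cx R], while the comparison theorems for nonnegative series are
   stated over a [realType]. *)
Local Notation normc := Normc.normc.

Section ComplexModulus.
Context {R : realType}.
Implicit Types z w : Cx R.

Lemma normr_normc z : `|z| = (normc z)%:C.
Proof. by case: z. Qed.

Lemma normc_ge0 z : 0 <= normc z.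
Proof. by case: z => a b; rewrite /Normc.normc sqrtr_ge0. Qed.

(* The [Normc] lemmas are stated on [R[i]] and do not rewrite terms of type
   [Cx R]. *)
Lemma normc0 : normc (0 : Cx R) = 0.
Proof. exact: Normc.normc0. Qed.

Lemma normc1 : normc (1 : Cx R) = 1.
Proof. exact: Normc.normc1. Qed.

Lemma normcM z w : normc (z * w) = normc z * normc w.
Proof. exact: Normc.normcM. Qed.

Lemma normcV z : normc z^-1 = (normc z)^-1.
Proof. exact: Normc.normcV. Qed.

Lemma normcD z w : normc (z + w) <= normc z + normc w.
Proof. by rewrite -lecR -!normr_normc rmorphD /= -!normr_normc ler_normD. Qed.

Lemma normcN z : normc (- z) = normc z.
Proof. by apply: complexI; rewrite -!normr_normc normrN. Qed.

Lemma normc_real (x : R) : normc x%:C = `|x|.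
Proof. by rewrite /Normc.normc /= expr0n /= addr0 sqrtr_sqr. Qed.

Lemma normcX z n : normc (z ^+ n) = normc z ^+ n.
Proof. by elim: n => [|n IH]; rewrite ?expr0 ?normc1 // !exprS normcM IH. Qed.

Lemma normc_eq0 z : (normc z == 0) = (z == 0).
Proof. by rewrite -(inj_eq (@complexI _)) -normr_normc normr_eq0. Qed.

Lemma normc_ge_ReIm z : `|complex.Re z| <= normc z /\ `|complex.Im z| <= normc z.
Proof.
case: z => a b; rewrite /Normc.normc /=; split.
- by rewrite -(sqrtr_sqr a) ler_sqrt ?lerDl ?sqr_ge0 // addr_ge0 ?sqr_ge0.
- by rewrite -(sqrtr_sqr b) ler_sqrt ?lerDr ?sqr_ge0 // addr_ge0 ?sqr_ge0.
Qed.

Lemma normc_complex (a b : R) : normc (a +i* b) <= `|a| + `|b|.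
Proof.
have -> : a +i* b = a%:C + 'i * b%:C by simpc.
apply: le_trans (normcD _ _) _; rewrite normcM !normc_real.
have -> : normc ('i : Cx R) = 1.
  by rewrite /Normc.normc /= expr0n expr1n add0r sqrtr1.
by rewrite mul1r.
Qed.

Lemma normc_sum (I : Type) (r : seq I) (P : pred I) (F : I -> Cx R) :
  normc (\sum_(i <- r | P i) F i) <= \sum_(i <- r | P i) normc (F i).
Proof.
apply: (big_rec2 (fun a b => normc a <= b)); first by rewrite normc0.
by move=> i y1 y2 _ h; apply: le_trans (normcD _ _) _; rewrite lerD2l.
Qed.

End ComplexModulus.

Section ComplexSeries.
Context {R : realType}.

Lemma cvg_series_half_ratio (g : R^nat) :
  (forall n, 0 <= g n) -> (\forall k \near \oo, g k.+1 <= g k / 2) ->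
  cvgn (series g).
Proof.
move=> g0 [m0 _ hr].
pose K := \sum_(j < m0.+1) g j * 2 ^+ j.
have head j : (j <= m0)%N -> g j * 2 ^+ j <= K.
  move=> hj; rewrite /K (bigD1 (Ordinal (hj : (j < m0.+1)%N))) //= lerDl.
  by apply: sumr_ge0 => i _; rewrite mulr_ge0 ?exprn_ge0.
have split2 j : g j = g j * 2 ^+ j * (2^-1) ^+ j.
  by rewrite -mulrA -exprMn mulfV ?pnatr_eq0 // expr1n mulr1.
have geom k : g k <= K * (2^-1) ^+ k.
  elim: k => [|k IH]; first by rewrite {1}split2 ler_pM2r ?exprn_gt0 ?head.
  have [hk|hk] := leqP m0 k; last by rewrite {1}split2 ler_pM2r ?exprn_gt0 ?head.
  by apply: le_trans (hr k hk) _; rewrite exprSr mulrA ler_pM2r ?invr_gt0.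
apply: (@series_le_cvg R g (geometric K (2^-1))) => // [n|].
  rewrite /= mulr_ge0 ?exprn_ge0 // (le_trans (g0 0%N)) //.
  by rewrite (le_trans (geom 0%N)) ?expr0 ?mulr1.
by apply: is_cvg_geometric_series; rewrite ger0_norm // invf_lt1 // ltr1n.
Qed.

Lemma cvgn_normcP (u : nat -> Cx R) (l : Cx R) :
  u @ \oo --> l <-> (fun n => normc (l - u n)) @ \oo --> (0 : R).
Proof.
split=> h.
  apply/cvgr0Pnorm_lt => e e0.
  have e0' : 0 < e%:C :> Cx R by rewrite ltcR.
  apply: filterS ((cvgrPdist_lt _ _).1 h _ e0') => n.
  by rewrite normr_normc ltcR ger0_norm ?normc_ge0.
apply/cvgrPdist_lt => e e0.
have ereal : e \is Num.real by rewrite realE ltW.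
have Re_e0 : 0 < complex.Re e by move: e0; case: e {ereal} => a b; rewrite ltcE /= => /andP[].
apply: filterS (cvgr0_norm_lt _ h _ Re_e0) => n.
by rewrite ger0_norm ?normc_ge0 // normr_normc -(RRe_real ereal) ltcR.
Qed.

Lemma cvg_series_normc (f : nat -> Cx R) :
  cvgn (series (fun k => normc (f k))) -> cvgn (series f).
Proof.
move=> hf; pose re k := complex.Re (f k); pose im k := complex.Im (f k).
have dominated (h : R^nat) : (forall k, `|h k| <= normc (f k)) -> cvgn (series h).
  move=> hh; apply: normed_cvg; apply: (series_le_cvg _ _ hh hf) => k /=.
    exact: normr_ge0.
  exact: normc_ge0.
have hre : cvgn (series re) by apply: dominated => k; case: (normc_ge_ReIm (f k)).
have him : cvgn (series im) by apply: dominated => k; case: (normc_ge_ReIm (f k)).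
have seriesE n : series f n = series re n +i* series im n.
  elim: n => [|n IH]; first by rewrite !seriesEord /= !big_ord0.
  by rewrite !seriesSr IH /re /im; case: (f n).
apply/cvg_ex; exists (limn (series re) +i* limn (series im)); apply/cvgn_normcP.
have dist0 (h : R^nat) : cvgn (series h) ->
    (fun n => `|limn (series h) - series h n|) @ \oo --> (0 : R).
  move=> ch; rewrite -(@normr0 _ R) -(subrr (limn (series h))).
  by apply: cvg_norm; apply: cvgB => //; exact: cvg_cst.
have H0 : (fun n => `|limn (series re) - series re n| +
                    `|limn (series im) - series im n|) @ \oo --> (0 : R).
  by rewrite -[0]addr0; apply: cvgD; apply: dist0.
apply: (squeeze_cvgr _ (cvg_cst 0) H0).
by near=> n; rewrite normc_ge0 /= seriesE; exact: normc_complex.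
Unshelve. all: by end_near.
Qed.

Lemma normc_lim_sub_series_le (f : nat -> Cx R) (g : R^nat) L :
  cvgn (series f) -> cvgn (series g) ->
  (forall m, (L <= m)%N -> normc (f m) <= g m) ->
  normc (limn (series f) - series f L) <= limn (series g) - series g L.
Proof.
move=> hf hg hfg.
have H : (fun n => normc (limn (series f) - series f n) + (series g n - series g L))
   @ \oo --> (0 + (limn (series g) - series g L)).
  apply: cvgD; first exact/cvgn_normcP.
  by apply: cvgB => //; exact: cvg_cst.
rewrite -[X in _ <= X]add0r -(cvg_lim _ H) //.
apply: limr_ge; first by apply/cvg_ex; eexists; exact: H.
near=> n.
have hLn : (L <= n)%N by near: n; exact: nbhs_infty_ge.
have -> : limn (series f) - series f L =
   (limn (series f) - series f n) + (series f n - series f L) by rewrite addrA subrK.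
apply: le_trans (normcD _ _) _; rewrite lerD2l !sub_series_geq //.
apply: le_trans (normc_sum _ _ _ _) _.
by apply: ler_sum_nat => k /andP[hk _]; exact: hfg.
Unshelve. all: by end_near.
Qed.

Lemma cvg_convolution0 (a T : R^nat) B :
  (forall k, 0 <= a k) -> cvgn (series a) -> (forall L, 0 <= T L <= B) ->
  T @ \oo --> (0 : R) ->
  (fun M => \sum_(0 <= k < M) a k * T (M - k)%N) @ \oo --> (0 : R).
Proof.
move=> a0 ha hT hT0.
set A := limn (series a).
have sA n : series a n <= A.
  apply: nondecreasing_cvgn_le => //.
  exact: (@nondecreasing_series R a xpredT 0 (fun n _ _ => a0 n)).
have A0 : 0 <= A by apply: le_trans (sA 0%N); rewrite seriesEnat /= big_geq.
have B0 : 0 <= B by case/andP: (hT 0%N) => h1 h2; apply: le_trans h1 h2.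
apply/cvgrPdist_lt => e e0.
set e' := e / (A + B + 1).
have e'0 : 0 < e' by rewrite divr_gt0 // ltr_wpDl // addr_ge0.
have [K _ hK] := (cvgrPdist_lt _ _).1 ha _ e'0.
have [L0 _ hL] := cvgr0_norm_lt _ hT0 _ e'0.
exists (K + L0)%N => // M /= hM.
have TM k : 0 <= T k by case/andP: (hT k).
rewrite sub0r normrN ger0_norm; last by apply: sumr_ge0 => k _; rewrite mulr_ge0.
have hKM : (K <= M)%N by apply: leq_trans hM; exact: leq_addr.
rewrite (@big_cat_nat _ _ _ K 0 M) //=.
(* The head of [a] meets the small values of [T], the tail of [a] meets [T <= B]. *)
have head : \sum_(0 <= k < K) a k * T (M - k)%N <= A * e'.
  apply: le_trans (_ : \sum_(0 <= k < K) a k * e' <= _).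
    apply: ler_sum_nat => k /andP[_ hk]; apply: ler_wpM2l => //.
    have := hL (M - k)%N; rewrite ger0_norm // => h; apply/ltW/h.
    apply: leq_trans (_ : (M - K <= M - k)%N); last by apply: leq_sub2l; exact: ltnW.
    by rewrite leq_subRL // addnC.
  by rewrite -mulr_suml ler_wpM2r ?(ltW e'0) //; exact: (sA K).
have tail : \sum_(K <= k < M) a k * T (M - k)%N <= e' * B.
  apply: le_trans (_ : \sum_(K <= k < M) a k * B <= _).
    by apply: ler_sum_nat => k _; apply: ler_wpM2l => //; case/andP: (hT (M-k)%N).
  rewrite -mulr_suml ler_wpM2r // -sub_series_geq //.
  apply: le_trans (_ : A - series a K <= _); first by rewrite lerD2r.
  have := hK K (leqnn K); rewrite ger0_norm ?subr_ge0 //; exact: ltW.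
apply: (le_lt_trans (lerD head tail)).
rewrite [e' * B]mulrC -mulrDl /e' mulrA ltr_pdivrMr; last by rewrite ltr_wpDl // addr_ge0.
nra.
Qed.

Lemma sum_antidiagonal (V : zmodType) (h : nat -> nat -> V) M :
  \sum_(0 <= n < M) \sum_(0 <= k < n.+1) h k (n - k)%N =
  \sum_(0 <= k < M) \sum_(0 <= m < M - k) h k m.
Proof.
elim: M => [|M IH]; first by rewrite !big_geq.
rewrite big_nat_recr //= IH [in RHS]big_nat_recr //= subSnn big_nat1.
rewrite (@eq_big_nat _ _ _ 0 M (fun k => \sum_(0 <= m < M.+1 - k) h k m)
  (fun k => \sum_(0 <= m < M - k) h k m + h k (M - k)%N)); last first.
  by move=> k /andP[_ hk]; rewrite (subSn (ltnW hk)) big_nat_recr.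
by rewrite big_split /= [X in _ + X = _](big_nat_recr _ _ _ (leq0n M)) /= subnn addrA.
Qed.

Lemma cvg_series_convolution (alpha : nat -> Cx R) (f : nat -> nat -> Cx R) (g : R^nat) :
  cvgn (series (fun k => normc (alpha k))) -> cvgn (series g) ->
  (forall k, cvgn (series (f k))) -> (forall k m, normc (f k m) <= g m) ->
  series (fun n => \sum_(0 <= k < n.+1) alpha k * f k (n - k)%N) @ \oo -->
    limn (series (fun k => alpha k * limn (series (f k)))).
Proof.
move=> ha hg hf hfg.
set B := limn (series g); pose T L := B - series g L.
have T_bounds L : 0 <= T L <= B.
  rewrite subr_ge0 gerBl; apply/andP; split.
    apply: nondecreasing_cvgn_le => //.
    apply: (@nondecreasing_series R g xpredT 0) => n _ _.
    exact: le_trans (normc_ge0 _) (hfg 0%N n).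
  by rewrite seriesEnat /=; apply: sumr_ge0 => i _; exact: le_trans (normc_ge0 _) (hfg 0%N i).
have T0 : T @ \oo --> (0 : R).
  by rewrite /T -(subrr B); apply: cvgB => //; exact: cvg_cst.
have tail_f k L : normc (limn (series (f k)) - series (f k) L) <= T L.
  exact: normc_lim_sub_series_le _ _ _ (hf k) hg (fun m _ => hfg k m).
have hsum : cvgn (series (fun k => alpha k * limn (series (f k)))).
  apply: cvg_series_normc.
  have B0 : 0 <= B by have /andP[h1 h2] := T_bounds 0%N; exact: le_trans h1 h2.
  have le_k k : normc (alpha k * limn (series (f k))) <= B * normc (alpha k).
    rewrite normcM mulrC ler_wpM2r ?normc_ge0 //.
    by have := tail_f k 0%N; rewrite /T !seriesEnat /= !big_geq // !subr0.
  apply: (@series_le_cvg R _ (B *: (fun k => normc (alpha k))) _ _ le_k).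
  - by move=> k; exact: normc_ge0.
  - by move=> k; rewrite /= mulr_ge0 ?normc_ge0.
  - exact: is_cvg_seriesZ.
set S := limn _; apply/cvgn_normcP.
have err M : normc (S - series (fun n => \sum_(0 <= k < n.+1) alpha k * f k (n - k)%N) M)
    <= normc (S - series (fun k => alpha k * limn (series (f k))) M)
       + \sum_(0 <= k < M) normc (alpha k) * T (M - k)%N.
  have -> : series (fun n => \sum_(0 <= k < n.+1) alpha k * f k (n - k)%N) M =
      \sum_(0 <= k < M) alpha k * series (f k) (M - k)%N.
    rewrite seriesEnat /= (sum_antidiagonal _ (fun k m => alpha k * f k m)).
    by apply: eq_bigr => k _; rewrite seriesEnat /= mulr_sumr.
  set sa := series _ M.
  have -> : S - \sum_(0 <= k < M) alpha k * series (f k) (M - k)%N =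
      (S - sa) + (sa - \sum_(0 <= k < M) alpha k * series (f k) (M - k)%N).
    by rewrite addrA subrK.
  apply: le_trans (normcD _ _) _; rewrite lerD2l /sa seriesEnat /= -sumrB.
  apply: le_trans (normc_sum _ _ _ _) _; apply: ler_sum_nat => k _ /=.
  by rewrite -mulrBr normcM ler_wpM2l ?normc_ge0 ?tail_f.
have err0 : (fun M => normc (S - series (fun k => alpha k * limn (series (f k))) M)
    + \sum_(0 <= k < M) normc (alpha k) * T (M - k)%N) @ \oo --> (0 : R).
  have := cvgD ((cvgn_normcP _ _).1 hsum)
    (cvg_convolution0 _ _ _ (fun k => normc_ge0 (alpha k)) ha T_bounds T0).
  by rewrite addr0 => h; exact: h.
apply: (squeeze_cvgr _ (cvg_cst 0) err0).
by near=> M; rewrite normc_ge0 /=; exact: err.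
Unshelve. all: by end_near.
Qed.

End ComplexSeries.

Lemma bin2S k : 'C(k.+1, 2) = ('C(k, 2) + k)%N.
Proof. by rewrite binS bin1. Qed.

Lemma bin2D k m : 'C(k + m, 2) = ('C(k, 2) + 'C(m, 2) + k * m)%N.
Proof.
elim: m => [|m IH]; first by rewrite addn0 muln0 addn0 /= addn0.
by rewrite addnS !bin2S IH mulnS; lia.
Qed.

Lemma half_ratio_le (R : realFieldType) (r n1 n2 n3 d0 d1 d2 d3 : R) :
  0 <= r <= 256^-1 -> [/\ 0 <= n1 <= 2, 0 <= n2 <= 2 & 0 <= n3 <= 2] ->
  [/\ 2^-1 <= d0, 2^-1 <= d1, 2^-1 <= d2 & 2^-1 <= d3] ->
  r * (n1 * n2 * n3) / (d0 * d1 * d2 * d3) <= 2^-1.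
Proof.
move=> /andP[r0 r1] [/andP[n10 n12] /andP[n20 n22] /andP[n30 n32]] [hd0 hd1 hd2 hd3].
have num : n1 * n2 * n3 <= 8.
  have -> : (8 : R) = 2 * 2 * 2 by rewrite -!natrM.
  by rewrite !ler_pM ?mulr_ge0.
have den : 16^-1 <= d0 * d1 * d2 * d3.
  have -> : (16 : R)^-1 = 2^-1 * 2^-1 * 2^-1 * 2^-1 by rewrite -!invfM -!natrM.
  by rewrite !ler_pM ?mulr_ge0.
have den0 : 0 < d0 * d1 * d2 * d3 by apply: lt_le_trans den; rewrite invr_gt0.
rewrite ler_pdivrMr //; apply: le_trans (_ : 256^-1 * 8 <= _).
  by rewrite ler_pM ?mulr_ge0.
lra.
Qed.

Section QDefinitions.
Context {R : realType} (q : R).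
Local Notation qc := (q%:C : Cx R).

Definition qterm (a b c d e w s : Cx R) (k : nat) : Cx R :=
  (-1) ^+ k * qc ^+ 'C(k, 2) * (qpoch qc a k * qpoch qc b k * qpoch qc c k)
      / (qpoch qc qc k * qpoch qc d k * qpoch qc e k * qpoch qc w k) * s ^+ k.

Definition euler_coef (m : nat) : Cx R :=
  (-1) ^+ m * qc ^+ 'C(m, 2) / qpoch qc qc m.

Definition euler_term (z : Cx R) (m : nat) : Cx R := euler_coef m * z ^+ m.

Definition euler (z : Cx R) : Cx R := limn (series (euler_term z)).

End QDefinitions.

Section QSeries.
Context {R : realType} {q : R} (hq : 0 < q < 1).
Local Notation qc := (q%:C : Cx R).
Local Notation qterm := (@qterm R q).
Local Notation euler_coef := (@euler_coef R q).
Local Notation euler_term := (@euler_term R q).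
Local Notation euler := (@euler R q).

Lemma qpochS z k : qpoch qc z k.+1 = qpoch qc z k * (1 - z * qc ^+ k).
Proof. by rewrite /qpoch big_ord_recr. Qed.

Lemma qpoch0 k : qpoch qc 0 k = 1.
Proof. by rewrite /qpoch big1 // => i _; rewrite mul0r subr0. Qed.

Lemma qtermS a b c d e w s k : qterm a b c d e w s k.+1 = qterm a b c d e w s k *
  ((-1) * qc ^+ k * ((1 - a * qc ^+ k) * (1 - b * qc ^+ k) * (1 - c * qc ^+ k))
    / ((1 - qc * qc ^+ k) * (1 - d * qc ^+ k) * (1 - e * qc ^+ k) * (1 - w * qc ^+ k))
    * s).
Proof. by rewrite /qterm !qpochS bin2S exprD !exprS !invfM; ring. Qed.

Lemma normc_qpow k : normc (qc ^+ k) = q ^+ k.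
Proof. by rewrite normcX normc_real ger0_norm //; case/andP: hq => /ltW. Qed.

Lemma near_qpow_normc_le (z : Cx R) (eps : R) : 0 < eps ->
  \forall k \near \oo, q ^+ k * normc z <= eps.
Proof.
move=> eps0; have q1 : `|q| < 1 by case/andP: hq => q0 q1; rewrite ger0_norm // ltW.
have : (fun k => q ^+ k * normc z) @ \oo --> (0 : R).
  by rewrite -(mul0r (normc z)); apply: cvgMl; exact: cvg_expr.
by move/cvgr_lt => /(_ _ eps0); apply: filterS => k /ltW.
Qed.

Lemma near_normc_1_sub z :
  \forall k \near \oo, 2^-1 <= normc (1 - z * qc ^+ k) <= 2.
Proof.
have half0 : (0 : R) < 2^-1 by rewrite invr_gt0 ltr0n.
apply: filterS (near_qpow_normc_le z _ half0) => k hk.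
have := normcD (1 - z * qc ^+ k) (z * qc ^+ k); have := normcD 1 (- (z * qc ^+ k)).
rewrite subrK normcN normcM normc_qpow normc1 => h1 h2; apply/andP; split; lra.
Qed.

Lemma qterm_half_ratio a b c d e w s :
  \forall k \near \oo, normc (qterm a b c d e w s k.+1) <= normc (qterm a b c d e w s k) / 2.
Proof.
near=> k.
rewrite qtermS normcM ler_wpM2l ?normc_ge0 //.
rewrite !normcM normcV !normcM normcN normc1 normc_qpow mul1r.
have -> : forall (r n d x : R), r * n * d * x = r * x * n * d by move=> *; ring.
apply: half_ratio_le.
- rewrite mulr_ge0 ?exprn_ge0 ?normc_ge0 //=; last by case/andP: hq => /ltW.
  by near: k; apply: near_qpow_normc_le; rewrite invr_gt0 ltr0n.
- by split; rewrite normc_ge0 /=; near: k;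
    apply: filterS (near_normc_1_sub _) => ? /andP[_ ->].
- by split; near: k; apply: filterS (near_normc_1_sub _) => ? /andP[h _]; exact: h.
Unshelve. all: by end_near.
Qed.

Lemma cvg_series_normc_qterm a b c d e w s :
  cvgn (series (fun k => normc (qterm a b c d e w s k))).
Proof.
apply: cvg_series_half_ratio => [k|]; first exact: normc_ge0.
exact: qterm_half_ratio.
Qed.

Lemma euler_termE z m : euler_term z m = qterm 0 0 0 0 0 0 z m.
Proof. by rewrite /euler_term /euler_coef /qterm !qpoch0 !mulr1. Qed.

Lemma cvg_series_normc_euler_term z :
  cvgn (series (fun m => normc (euler_term z m))).
Proof.
under eq_fun do rewrite euler_termE.
exact: cvg_series_normc_qterm.
Qed.

Lemma cvg_series_euler_term z : cvgn (series (euler_term z)).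
Proof. exact/cvg_series_normc/cvg_series_normc_euler_term. Qed.

Lemma qpoch_neq0 z k : (forall j, z * qc ^+ j != 1) -> qpoch qc z k != 0.
Proof.
move=> h; rewrite /qpoch prodf_seq_neq0; apply/allP => i _ /=.
by rewrite subr_eq0 eq_sym h.
Qed.

Lemma qpoch_qq_neq0 k : qpoch qc qc k != 0.
Proof.
apply: qpoch_neq0 => j; rewrite -exprS; apply/negP => /eqP /(congr1 (@Normc.normc R)).
rewrite normc_qpow normc1 => /eqP; rewrite lt_eqF // exprn_ilt1 //.
  by case/andP: hq => /ltW.
by case/andP: hq.
Qed.

Lemma mul_qpow_neq1 z : (forall m, z != qc ^- m) -> forall j, z * qc ^+ j != 1.
Proof.
move=> h j; apply: contra (h j) => /eqP e.
have qj0 : qc ^+ j != 0.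
  by rewrite expf_neq0 // -normc_eq0 normc_real normr_eq0 gt_eqF //; case/andP: hq.
by rewrite -[z](mulfK qj0) e mul1r.
Qed.

Lemma euler_coefS N : euler_coef N.+1 * (1 - qc * qc ^+ N) = - (qc ^+ N * euler_coef N).
Proof.
have := qpoch_qq_neq0 N.+1; rewrite qpochS mulf_eq0 negb_or => /andP[qN0 u0].
by rewrite /euler_coef qpochS bin2S exprD exprS invfM; field; rewrite qN0 u0.
Qed.

Lemma series_euler_termS z N : series (euler_term z) N.+1 =
  series (euler_term (qc * z)) N.+1 - z * series (euler_term (qc * z)) N.
Proof.
have termS M : euler_term z M.+1 =
    euler_term (qc * z) M.+1 - z * euler_term (qc * z) M.
  rewrite /euler_term !exprMn !exprS.
  transitivity (euler_coef M.+1 * (1 - qc * qc ^+ M) * (z * z ^+ M) +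
                euler_coef M.+1 * ((qc * qc ^+ M) * (z * z ^+ M))); first by ring.
  by rewrite euler_coefS; ring.
elim: N => [|N IH].
  by rewrite !seriesEnat /= !big_nat1 big_geq // mulr0 subr0 /euler_term !expr0.
rewrite seriesSr IH [series _ N.+2]seriesSr [series _ N.+1]seriesSr termS; ring.
Qed.

Lemma euler_qshift z : euler z = (1 - z) * euler (qc * z).
Proof.
have shifted w : (fun N => series (euler_term w) N.+1) @ \oo --> euler w.
  by rewrite (cvg_shiftS (series (euler_term w))); exact: cvg_series_euler_term.
have := shifted z; under eq_fun do rewrite series_euler_termS.
have h2 : (fun N => series (euler_term (qc * z)) N.+1 - z * series (euler_term (qc * z)) N)
    @ \oo --> euler (qc * z) - z * euler (qc * z).
  by apply: cvgB; [exact: shifted | apply: cvgMr; exact: cvg_series_euler_term].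
by move=> h; rewrite -(cvg_lim _ h) // (cvg_lim _ h2) //; ring.
Qed.

Lemma qpoch_mul_euler z N : qpoch qc z N * euler (qc ^+ N * z) = euler z.
Proof.
elim: N => [|N IH]; first by rewrite /qpoch big_ord0 mul1r expr0 mul1r.
rewrite qpochS -IH (euler_qshift (qc ^+ N * z)) exprS [z * qc ^+ N]mulrC -!mulrA.
by rewrite [qc * (qc ^+ N * z)]mulrA.
Qed.

Lemma normc_euler_sub1_le w : normc w <= 1 ->
  normc (euler w - 1) <= normc w * limn (series (fun m => normc (euler_coef m))).
Proof.
move=> w1; set K := limn _.
have hc : cvgn (series (fun m => normc (euler_coef m))).
  have := cvg_series_normc_euler_term 1.
  by under eq_fun do rewrite /euler_term expr1n mulr1.
have hg := @is_cvg_seriesZ R _ (normc w) hc.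
have dom m : (1 <= m)%N ->
    normc (euler_term w m) <= (normc w *: (fun m => normc (euler_coef m))) m.
  case: m => // m _; rewrite /euler_term normcM normcX exprS /= mulrCA.
  by rewrite ler_wpM2l ?normc_ge0 // ler_piMr ?normc_ge0 // exprn_ile1 ?normc_ge0.
have := normc_lim_sub_series_le _ _ _ (cvg_series_euler_term w) hg dom.
have -> : series (euler_term w) 1 = 1.
  rewrite seriesEnat /= big_nat1 /euler_term /euler_coef /qpoch big_ord0.
  by rewrite !expr0 invr1 !mulr1.
move/le_trans; apply; rewrite (lim_seriesZ _ hc) -/K seriesEnat /= big_nat1 /= gerBl //.
by rewrite mulr_ge0 ?normc_ge0.
Qed.

Lemma euler_qpow_cvg1 z : (fun N => euler (qc ^+ N * z)) @ \oo --> (1 : Cx R).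
Proof.
apply/cvgn_normcP.
pose K := limn (series (fun m => normc (euler_coef m))).
have hq1 : `|q| < 1 by case/andP: hq => h1 h2; rewrite ger0_norm // ltW.
have small : (fun N => q ^+ N * normc z) @ \oo --> (0 : R).
  by rewrite -(mul0r (normc z)); apply: cvgMl; exact: cvg_expr.
have smallK : (fun N => q ^+ N * normc z * K) @ \oo --> (0 : R).
  by rewrite -(mul0r K); apply: cvgMl.
apply: (squeeze_cvgr _ (cvg_cst 0) smallK).
near=> N; rewrite normc_ge0 /= -normcN opprB.
have h : normc (qc ^+ N * z) <= 1.
  by rewrite normcM normc_qpow; apply: ltW; near: N; apply: (cvgr_lt _ small); rewrite ltr01.
by apply: le_trans (normc_euler_sub1_le _ h) _; rewrite normcM normc_qpow.
Unshelve. all: by end_near.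
Qed.

Lemma qpoch_cvg_euler z : (fun N => qpoch qc z N) @ \oo --> euler z.
Proof.
have hinv : (fun N => (euler (qc ^+ N * z))^-1) @ \oo --> (1 : Cx R).
  by rewrite -[X in _ --> X]invr1; apply: cvgV; [exact: oner_neq0 | exact: euler_qpow_cvg1].
have hm : (fun N => euler z * (euler (qc ^+ N * z))^-1) @ \oo --> euler z.
  by rewrite -[X in _ --> X]mulr1; apply: cvgMr.
apply: cvg_trans hm; apply: near_eq_cvg.
have near1 : \forall N \near \oo, normc (1 - euler (qc ^+ N * z)) < 1.
  by apply: (cvgr_lt _ ((cvgn_normcP _ _).1 (euler_qpow_cvg1 z))); rewrite ltr01.
near=> N.
have hF : euler (qc ^+ N * z) != 0.
  apply/negP => /eqP h0; have : normc (1 - euler (qc ^+ N * z)) < 1 by near: N.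
  by rewrite h0 subr0 normc1 ltxx.
by rewrite /= -(qpoch_mul_euler z N) mulfK.
Unshelve. all: by end_near.
Qed.

Lemma normc_euler_term_qpow_le z k m :
  normc (euler_term (qc ^+ k * z) m) <= normc (euler_term z m).
Proof.
have [q0 q1] : 0 <= q /\ q <= 1 by case/andP: hq => /ltW ? /ltW.
rewrite /euler_term normcM [X in _ <= X]normcM ler_wpM2l ?normc_ge0 //.
rewrite !normcX normcM normc_qpow exprMn.
by rewrite ler_piMl ?exprn_ge0 ?normc_ge0 // exprn_ile1 ?exprn_ge0 // exprn_ile1.
Qed.

Lemma phi_term_convolution a b c d e x y t n :
  (forall m, d != qc ^- m) -> (forall m, e != qc ^- m) ->
  phi qc a b c d e x y n * ((-1) ^+ n * qc ^+ 'C(n, 2) * t ^+ n) / qpoch qc qc n =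
  \sum_(0 <= k < n.+1)
    qterm a b c d e 0 (y * t) k * euler_term (qc ^+ k * (x * t)) (n - k)%N.
Proof.
(* With n = k + m, q^C(n,2) = q^C(k,2) q^C(m,2) q^(k m) and q^(k m) (x t)^m = (q^k x t)^m. *)
move=> hd he; rewrite /phi -mulrA mulr_suml big_mkord; apply: eq_bigr => [[k hk]] _ /=.
have [m ->] : exists m, n = (k + m)%N by exists (n - k)%N; rewrite subnKC.
rewrite /qbinom !addKn /qterm /euler_term /euler_coef !qpoch0 bin2D !exprD !exprMn exprM.
have := qpoch_qq_neq0 (k + m); have := qpoch_qq_neq0 k; have := qpoch_qq_neq0 m.
have := qpoch_neq0 d k (mul_qpow_neq1 d hd); have := qpoch_neq0 e k (mul_qpow_neq1 e he).
by move=> h1 h2 h3 h4 h5; field; rewrite h1 h2 h3 h4 h5.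
Qed.

Lemma qterm_euler a b c d e w s k :
  (forall m, d != qc ^- m) -> (forall m, e != qc ^- m) -> (forall m, w != qc ^- m) ->
  qterm a b c d e 0 s k * euler (qc ^+ k * w) = euler w * qterm a b c d e w s k.
Proof.
move=> hd he hw; rewrite -(qpoch_mul_euler w k) /qterm qpoch0.
have := qpoch_qq_neq0 k; have := qpoch_neq0 d k (mul_qpow_neq1 d hd).
have := qpoch_neq0 e k (mul_qpow_neq1 e he); have := qpoch_neq0 w k (mul_qpow_neq1 w hw).
by move=> h1 h2 h3 h4; field; rewrite h1 h2 h3 h4.
Qed.

End QSeries.

Theorem corollary1 (R : realType) (q : R) (a b c d e x y t : Cx R) :
  0 < q < 1 ->
  `|y * t| < 1 ->
  (forall m : nat, d != (q%:C : Cx R) ^- m) ->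
  (forall m : nat, e != (q%:C : Cx R) ^- m) ->
  (forall m : nat, x * t != (q%:C : Cx R) ^- m) ->
  let qc : Cx R := q%:C in
  let u := fun n : nat =>
    phi qc a b c d e x y n * ((-1) ^+ n * qc ^+ 'C(n, 2) * t ^+ n)
      / qpoch qc qc n in
  let v := fun N : nat =>
    (-1) ^+ N * qc ^+ 'C(N, 2)
      * (qpoch qc a N * qpoch qc b N * qpoch qc c N)
      / (qpoch qc qc N * qpoch qc d N * qpoch qc e N * qpoch qc (x * t) N)
      * (y * t) ^+ N in
  let P := fun n : nat => qpoch qc (x * t) n in
  [/\ cvgn (series u), cvgn P, cvgn (series v) &
      limn (series u) = limn P * limn (series v)].
Proof.
move=> hq _ hd he hxt qc u v P.
have hv : cvgn (series v).
  by apply: cvg_series_normc; exact: (cvg_series_normc_qterm hq a b c d e (x * t) (y * t)).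
have hP : P @ \oo --> euler q (x * t) := qpoch_cvg_euler hq (x * t).
have hu : series u @ \oo --> euler q (x * t) * limn (series v).
  have -> : u = fun n => \sum_(0 <= k < n.+1) qterm q a b c d e 0 (y * t) k *
      euler_term q (qc ^+ k * (x * t)) (n - k)%N.
    by apply/funext => n; exact: (phi_term_convolution hq a b c d e x y t n hd he).
  have -> : euler q (x * t) * limn (series v) = limn (series (euler q (x * t) *: v)).
    by rewrite (lim_seriesZ _ hv).
  have -> : euler q (x * t) *: v =
      fun k => qterm q a b c d e 0 (y * t) k * euler q (qc ^+ k * (x * t)).
    by apply/funext => k; rewrite (qterm_euler hq a b c d e (x * t) (y * t) k hd he hxt).
  apply: (cvg_series_convolution _ _ _ (cvg_series_normc_qterm hq a b c d e 0 (y * t))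
    (cvg_series_normc_euler_term hq (x * t))) => [k|k m].
  - exact: cvg_series_euler_term.
  - exact: normc_euler_term_qpow_le.
split.
- exact: (cvgP _ hu).
- exact: (cvgP _ hP).
- exact: hv.
- by rewrite (cvg_lim _ hu) // (cvg_lim _ hP).
Qed.
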